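(* In the ring $\mathbb{Q}(a,b)[[q]]$ of formal power series in $q$ with coefficients rational functions of $a,b$, \[ 1+\sum_{n=1}^{\infty}\frac{q^{n}}{(aq;q)_n\,(bq;q)_n} =(1-a^{-1})\left(1+\sum_{n=1}^{\infty}\frac{(-1)^{n}q^{\binom{n+1}{2}}b^{n}a^{-n}}{(bq;q)_n}\right) +a^{-1}\sum_{n=0}^{\infty}(-1)^{n}q^{\binom{n+1}{2}}b^{n}a^{-n}\prod_{k=1}^{\infty}\frac{1}{(1-aq^{k})(1-bq^{k})}. \]
   Context: For an indeterminate or element $p$ and $n\ge 0$, $(p;q)_n=(1-p)(1-pq)\cdots(1-pq^{n-1})$, so $(aq;q)_n=(1-aq)(1-aq^2)\cdots(1-aq^n)$. *)

From HB Require Import structures.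
From mathcomp Require Import all_boot all_order all_algebra.
Set Implicit Arguments. Unset Strict Implicit. Unset Printing Implicit Defensive.
Import Order.TTheory GRing.Theory Num.Theory.
Local Open Scope ring_scope.

(* The field Q(a,b) = fraction field of Q[b][a]. *)
Definition Qab : fieldType := {fraction {poly {poly rat}}}.
Definition var_a : Qab := FracField.tofrac ('X : {poly {poly rat}}).
Definition var_b : Qab := FracField.tofrac ((('X : {poly rat}))%:P : {poly {poly rat}}).

Section PowerSeries.
Variable K : fieldType.

(* formal power series in q: n |-> coefficient of q^n *)
Definition ps := nat -> K.

Definition ps_const (c : K) : ps := fun n => if n == 0%N then c else 0.
Definition ps_zero : ps := ps_const 0.
Definition ps_one : ps := ps_const 1.
Definition ps_add (f g : ps) : ps := fun n => f n + g n.
Definition ps_opp (f : ps) : ps := fun n => - f n.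
Definition ps_sub (f g : ps) : ps := ps_add f (ps_opp g).
Definition ps_scale (c : K) (f : ps) : ps := fun n => c * f n.
Definition ps_mul (f g : ps) : ps :=
  fun n => \sum_(i < n.+1) f i * g (n - i)%N.
Definition ps_qpow (k : nat) : ps := fun n => if n == k then 1 else 0.

(* multiplicative inverse of a series (meaningful when f 0 != 0):
   g 0 = (f 0)^-1, g (n+1) = - (f 0)^-1 * sum_{j=1}^{n+1} f j * g (n+1-j) *)
Fixpoint ps_inv_seq (f : ps) (n : nat) : seq K :=
  match n with
  | 0 => [:: (f 0%N)^-1]
  | n'.+1 => let s := ps_inv_seq f n' in
      rcons s (- (f 0%N)^-1 * \sum_(i < n'.+1) f i.+1 * nth 0 s (n' - i)%N)
  end.
Definition ps_inv (f : ps) : ps := fun n => nth 0 (ps_inv_seq f n) n.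

Definition qpoch_cq (c : K) (n : nat) : ps :=
  \big[ps_mul/ps_one]_(1 <= k < n.+1) ps_sub ps_one (ps_scale c (ps_qpow k)).

Definition ps_lim (F : nat -> ps) (S : ps) : Prop :=
  forall n, exists M, forall m, (M <= m)%N -> F m n = S n.
Definition ps_sum_to (F : nat -> ps) (S : ps) : Prop :=
  ps_lim (fun m => \big[ps_add/ps_zero]_(k < m) F k) S.
Definition ps_prod_to (F : nat -> ps) (S : ps) : Prop :=
  ps_lim (fun m => \big[ps_mul/ps_one]_(k < m) F k) S.

End PowerSeries.

(* Multiplying the first M terms by their common denominator
   (aq;q)_M (bq;q)_M turns both sides into polynomials in q.  The resulting
   polynomial identity [finite_identity] holds exactly, in any commutative
   ring where a is invertible, except that the theta-type sum comes with
   extra factors (a q^(M-j+1);q)_j, which are 1 modulo q^(M+1).  It is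
   proved by induction on M after replacing b by b q^k: both sides satisfy
   the same recurrence linking (k, M+1) to (k+1, M).  All series converge
   q-adically, so the coefficient of q^N can be read off any truncation
   with M > N. *)

From HB Require Import structures.
From mathcomp Require Import all_boot all_order all_algebra ring zify.
From Stdlib Require Import FunctionalExtensionality.
Import Order.TTheory GRing.Theory Num.Theory.
Local Open Scope ring_scope.

(* [qprod c x lo hi] is [(c x^lo; x)_(hi-lo)]. *)
Definition qprod {R : comNzRingType} (c x : R) (lo hi : nat) : R :=
  \prod_(lo <= j < hi) (1 - c * x ^+ j).

Lemma qprod_nn {R : comNzRingType} (c x : R) n : qprod c x n n = 1.
Proof. by rewrite /qprod big_geq. Qed.

Lemma qprod_recr {R : comNzRingType} (c x : R) lo hi : (lo <= hi)%N ->
  qprod c x lo hi.+1 = qprod c x lo hi * (1 - c * x ^+ hi).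
Proof. by move=> h; rewrite /qprod big_nat_recr. Qed.

Lemma qprod_cat {R : comNzRingType} (c x : R) lo mid hi :
  (lo <= mid <= hi)%N -> qprod c x lo hi = qprod c x lo mid * qprod c x mid hi.
Proof. by case/andP=> h1 h2; rewrite /qprod (big_cat_nat h1 h2). Qed.

Section FiniteIdentity.
Context {R : comNzRingType} (a ai b q : R).
Hypothesis aiK : ai * a = 1.

Definition finite_lhs k M := \sum_(n < M.+1)
  q ^+ n * qprod a q n.+1 M.+1 * qprod b q (n + k).+1 (M + k).+1.

Definition rhs_coef k j := (- (b * ai)) ^+ j * q ^+ (j * k + 'C(j.+1, 2)).

Definition finite_rhs1 k M :=
  \sum_(j < M.+1) rhs_coef k j * qprod a q 1 M.+1 * qprod b q (k + j).+1 (M + k).+1.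

Definition finite_rhs2 k M :=
  \sum_(j < M.+1) rhs_coef k j * qprod a q (M - j).+1 M.+1.

Lemma finite_lhs0 k : finite_lhs k 0 = 1.
Proof. by rewrite /finite_lhs big_ord1 !qprod_nn expr0 !mulr1. Qed.

Lemma finite_lhsS k M : finite_lhs k M.+1 =
  (1 - a * q ^+ M.+1) * (1 - b * q ^+ (M.+1 + k)) * finite_lhs k M + q ^+ M.+1.
Proof.
rewrite /finite_lhs big_ord_recr /= !qprod_nn !mulr1 big_distrr; congr (_ + _).
apply: eq_bigr => -[n hn] _ /=.
rewrite (qprod_recr a q n.+1 M.+1) // addSn (qprod_recr b q (n + k).+1 (M + k).+1).
  by ring.
by rewrite ltnS leq_add2r.
Qed.

Lemma finite_lhs_shift k M : finite_lhs k M.+1 =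
  (1 - ai) * qprod a q 1 M.+2 * qprod b q k.+1 (M.+1 + k).+1 + ai
  - b * ai * q ^+ k.+1 * (1 - a * q ^+ M.+1) * finite_lhs k.+1 M.
Proof.
elim: M => [|M IH].
  by rewrite finite_lhsS !finite_lhs0 /qprod !big_nat1; ring: aiK.
rewrite finite_lhsS (finite_lhsS k.+1) IH (qprod_recr a q 1 M.+2) //.
rewrite (addSn M.+1 k) (qprod_recr b q k.+1 (M.+1 + k).+1); last by rewrite ltnS leq_addl.
rewrite !addSn !addnS !exprS exprD; ring: aiK.
Qed.

Lemma rhs_coef0 k : rhs_coef k 0 = 1.
Proof. by rewrite /rhs_coef !expr0 mul1r. Qed.

Lemma rhs_coefS k j : rhs_coef k j.+1 = - (b * ai) * q ^+ k.+1 * rhs_coef k.+1 j.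
Proof.
rewrite /rhs_coef.
have -> : (j.+1 * k + 'C(j.+2, 2) = k.+1 + (j * k.+1 + 'C(j.+1, 2)))%N.
  by rewrite binS bin1; nia.
by rewrite exprD exprS; ring.
Qed.

Lemma finite_rhs1S k M : finite_rhs1 k M.+1 =
  qprod a q 1 M.+2 * qprod b q k.+1 (M.+1 + k).+1
  - b * ai * q ^+ k.+1 * (1 - a * q ^+ M.+1) * finite_rhs1 k.+1 M.
Proof.
rewrite /finite_rhs1 big_ord_recl rhs_coef0 mul1r addn0; congr (_ + _).
rewrite -mulNr big_distrr; apply: eq_bigr => i _ /=.
rewrite rhs_coefS (qprod_recr a q 1 M.+1) // !addSn !addnS /=; ring.
Qed.

Lemma finite_rhs2S k M : finite_rhs2 k M.+1 =
  1 - b * ai * q ^+ k.+1 * (1 - a * q ^+ M.+1) * finite_rhs2 k.+1 M.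
Proof.
rewrite /finite_rhs2 big_ord_recl rhs_coef0 mul1r subn0 qprod_nn; congr (_ + _).
rewrite -mulNr big_distrr; apply: eq_bigr => i _ /=.
rewrite rhs_coefS subSS (qprod_recr a q (M - i).+1 M.+1) ?ltnS ?leq_subr //; ring.
Qed.

Lemma finite_identity k M :
  finite_lhs k M = (1 - ai) * finite_rhs1 k M + ai * finite_rhs2 k M.
Proof.
elim: M k => [|M IH] k.
  rewrite finite_lhs0 /finite_rhs1 /finite_rhs2 !big_ord1 rhs_coef0 !addn0 subnn.
  by rewrite !qprod_nn; ring.
by rewrite finite_lhs_shift finite_rhs1S finite_rhs2S IH; ring.
Qed.

End FiniteIdentity.

Lemma leq_bin2 j : (j <= 'C(j.+1, 2))%N.
Proof. by case: j => // j; rewrite binS bin1 leq_addl. Qed.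

Section PowerSeries.
Context {K : fieldType}.
Local Notation ps := (ps K).
Implicit Types (f g h : ps) (p r : {poly K}) (c : K).

Lemma ps_ext f g : f =1 g -> f = g.
Proof. exact: functional_extensionality. Qed.

Lemma ps_sum_coef (I : Type) (s : seq I) (P : pred I) (F : I -> ps) n :
  (\big[@ps_add K/ps_zero K]_(i <- s | P i) F i) n = \sum_(i <- s | P i) F i n.
Proof.
by apply: (big_morph (fun f : ps => f n)) => //; rewrite /ps_zero /ps_const; case: ifP.
Qed.

Lemma ps_mul_coef0 f g : ps_mul f g 0 = f 0%N * g 0%N.
Proof. by rewrite /ps_mul big_ord1. Qed.

Definition ps_agree n f g := forall i, (i <= n)%N -> f i = g i.

Lemma ps_agree_mul {n f f' g g'} : ps_agree n f f' -> ps_agree n g g' ->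
  ps_agree n (ps_mul f g) (ps_mul f' g').
Proof.
move=> ef eg i le_in; apply: eq_bigr => j _.
rewrite ef ?eg //; first exact: leq_trans (leq_subr _ _) le_in.
by apply: leq_trans le_in; rewrite -ltnS.
Qed.

Definition ps_of_poly p : ps := fun n => p`_n.

Lemma ps_of_polyD p r : ps_of_poly (p + r) = ps_add (ps_of_poly p) (ps_of_poly r).
Proof. by apply: ps_ext => n; rewrite /ps_of_poly coefD. Qed.

Lemma ps_of_polyZ c p : ps_of_poly (c *: p) = ps_scale c (ps_of_poly p).
Proof. by apply: ps_ext => n; rewrite /ps_of_poly coefZ. Qed.

Lemma ps_of_polyM p r : ps_of_poly (p * r) = ps_mul (ps_of_poly p) (ps_of_poly r).
Proof. by apply: ps_ext => n; rewrite /ps_of_poly coefM. Qed.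

Lemma ps_of_poly0 : ps_of_poly 0 = ps_zero K.
Proof. by apply: ps_ext => n; rewrite /ps_of_poly coef0 /ps_zero /ps_const; case: ifP. Qed.

Lemma ps_of_poly1 : ps_of_poly 1 = ps_one K.
Proof. by apply: ps_ext => n; rewrite /ps_of_poly coef1 /ps_one /ps_const; case: ifP. Qed.

Lemma ps_of_polyXn k : ps_of_poly 'X^k = ps_qpow K k.
Proof. by apply: ps_ext => n; rewrite /ps_of_poly coefXn /ps_qpow; case: ifP. Qed.

Lemma ps_of_poly_sum (I : Type) (s : seq I) (P : pred I) (F : I -> {poly K}) :
  ps_of_poly (\sum_(i <- s | P i) F i) =
  \big[@ps_add K/ps_zero K]_(i <- s | P i) ps_of_poly (F i).
Proof. exact: (big_morph _ ps_of_polyD ps_of_poly0). Qed.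

Lemma ps_of_poly_prod (I : Type) (s : seq I) (P : pred I) (F : I -> {poly K}) :
  ps_of_poly (\prod_(i <- s | P i) F i) =
  \big[@ps_mul K/ps_one K]_(i <- s | P i) ps_of_poly (F i).
Proof. exact: (big_morph _ ps_of_polyM ps_of_poly1). Qed.

Lemma ps_agree_trunc n f : ps_agree n f (ps_of_poly (\poly_(i < n.+1) f i)).
Proof. by move=> i le_in; rewrite /ps_of_poly coef_poly ltnS le_in. Qed.

Lemma ps_agree_of_dvdp {n p r} :
  'X^(n.+1) %| p - r -> ps_agree n (ps_of_poly p) (ps_of_poly r).
Proof.
case/dvdpP=> s /eqP; rewrite subr_eq => /eqP -> i le_in.
by rewrite /ps_of_poly coefD coefMXn ltnS le_in add0r.
Qed.

(* Ring laws on coefficient [n] only involve the truncations at order [n],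
   where they are polynomial identities. *)
Lemma ps_mulC f g : ps_mul f g = ps_mul g f.
Proof.
apply: ps_ext => n; have ef := ps_agree_trunc n f; have eg := ps_agree_trunc n g.
by rewrite (ps_agree_mul ef eg) // -ps_of_polyM mulrC ps_of_polyM (ps_agree_mul eg ef).
Qed.

Lemma ps_mulA f g h : ps_mul f (ps_mul g h) = ps_mul (ps_mul f g) h.
Proof.
apply: ps_ext => n; have ef := ps_agree_trunc n f; have eg := ps_agree_trunc n g.
have eh := ps_agree_trunc n h.
rewrite (ps_agree_mul ef (ps_agree_mul eg eh)) // (ps_agree_mul (ps_agree_mul ef eg) eh) //.
by rewrite -!ps_of_polyM mulrA.
Qed.

Lemma ps_mul1 f : ps_mul (ps_one K) f = f.
Proof.
apply: ps_ext => n; rewrite /ps_mul big_ord_recl subn0 big1 ?addr0 ?mul1r // => i _.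
by rewrite /ps_one /ps_const mul0r.
Qed.

Lemma ps_mulr1 f : ps_mul f (ps_one K) = f.
Proof. by rewrite ps_mulC ps_mul1. Qed.

Lemma ps_mulDl f g h : ps_mul (ps_add f g) h = ps_add (ps_mul f h) (ps_mul g h).
Proof.
by apply: ps_ext => n; rewrite /ps_mul /ps_add -big_split; apply: eq_bigr => i _; rewrite mulrDl.
Qed.

Lemma ps_mulZl c f g : ps_mul (ps_scale c f) g = ps_scale c (ps_mul f g).
Proof.
by apply: ps_ext => n; rewrite /ps_mul /ps_scale big_distrr; apply: eq_bigr => i _; rewrite -mulrA.
Qed.

Lemma ps_sum_mull (I : Type) (s : seq I) (P : pred I) (F : I -> ps) g :
  ps_mul (\big[@ps_add K/ps_zero K]_(i <- s | P i) F i) g =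
  \big[@ps_add K/ps_zero K]_(i <- s | P i) ps_mul (F i) g.
Proof.
have mul0g : ps_mul (ps_zero K) g = ps_zero K.
  apply: ps_ext => n; rewrite /ps_mul /ps_zero /ps_const big1 => [|i _]; first by case: ifP.
  by case: ifP; rewrite mul0r.
by apply: (big_morph (fun f => ps_mul f g)) => // f h; apply: ps_mulDl.
Qed.

Lemma ps_qpowM_coef d f i : (i < d)%N -> ps_mul (ps_qpow K d) f i = 0.
Proof.
move=> lt_id; rewrite /ps_mul big1 // => -[j /= le_ji] _; rewrite /ps_qpow.
by case: eqP => [ej|_]; [move: lt_id; rewrite -ej ltnNge -ltnS le_ji | rewrite mul0r].
Qed.

Lemma ps_inv_seq_size f n : size (ps_inv_seq f n) = n.+1.
Proof. by elim: n => //= n IHn; rewrite size_rcons IHn. Qed.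

Lemma ps_inv_seq_prefix f n m i : (i <= n <= m)%N ->
  nth 0 (ps_inv_seq f m) i = nth 0 (ps_inv_seq f n) i.
Proof.
case/andP=> le_in; elim: m => [|m IHm]; first by rewrite leqn0 => /eqP ->.
rewrite leq_eqVlt ltnS => /orP[/eqP -> // | le_nm].
by rewrite /= nth_rcons ps_inv_seq_size (leq_ltn_trans le_in) ?IHm.
Qed.

Lemma ps_invS f n :
  ps_inv f n.+1 = - (f 0%N)^-1 * \sum_(i < n.+1) f i.+1 * ps_inv f (n - i)%N.
Proof.
rewrite /ps_inv /= nth_rcons ps_inv_seq_size ltnn eqxx.
congr (_ * _); apply: eq_bigr => i _.
by rewrite (@ps_inv_seq_prefix f (n - i) n) ?leqnn ?leq_subr.
Qed.

Lemma ps_inv_agree {n f g} : ps_agree n f g -> ps_agree n (ps_inv f) (ps_inv g).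
Proof.
have seqE m : ps_agree m f g -> ps_inv_seq f m = ps_inv_seq g m.
  elim: m => [|m IHm] efg /=; first by rewrite efg.
  rewrite IHm => [|i le_im]; last exact/efg/leqW.
  by rewrite efg //; congr (rcons _ (_ * _)); apply: eq_bigr => i _; rewrite efg.
move=> efg i le_in.
by rewrite /ps_inv -(@ps_inv_seq_prefix f i n) ?leqnn // seqE // (@ps_inv_seq_prefix g i n) ?leqnn.
Qed.

Lemma ps_mulV f : f 0%N != 0 -> ps_mul f (ps_inv f) = ps_one K.
Proof.
move=> f0; apply: ps_ext => -[|n]; first by rewrite ps_mul_coef0 mulfV.
rewrite /ps_mul big_ord_recl subn0 ps_invS mulrA mulrN mulfV // mulN1r.
by rewrite /ps_one /ps_const /= addNr.
Qed.

Lemma ps_divr_eq f g h : g 0%N != 0 -> ps_mul f g = h -> f = ps_mul h (ps_inv g).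
Proof. by move=> g0 <-; rewrite -ps_mulA ps_mulV // ps_mulr1. Qed.

Lemma ps_inv1 : ps_inv (ps_one K) = ps_one K.
Proof.
symmetry; rewrite -[ps_inv _]ps_mul1; apply: ps_divr_eq; last exact: ps_mul1.
by rewrite /ps_one /ps_const oner_neq0.
Qed.

Lemma ps_invKl f g h : g 0%N != 0 ->
  ps_mul (ps_mul f (ps_inv g)) (ps_mul g h) = ps_mul f h.
Proof.
by move=> g0; rewrite -ps_mulA (ps_mulA (ps_inv g)) (ps_mulC (ps_inv g)) ps_mulV // ps_mul1.
Qed.

Lemma ps_invM f g : f 0%N != 0 -> g 0%N != 0 ->
  ps_inv (ps_mul f g) = ps_mul (ps_inv f) (ps_inv g).
Proof.
move=> f0 g0; symmetry; rewrite -[ps_inv (ps_mul f g)]ps_mul1.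
apply: ps_divr_eq; first by rewrite ps_mul_coef0 mulf_neq0.
by rewrite (ps_mulC f) ps_invKl // ps_mulC ps_mulV.
Qed.

Lemma ps_lim_agree {F : nat -> ps} {S} n : ps_lim F S ->
  exists M, forall m, (M <= m)%N -> ps_agree n (F m) S.
Proof.
move=> limFS; elim: n => [|n [M1 IHn]].
  by have [M eM] := limFS 0%N; exists M => m le_Mm i; rewrite leqn0 => /eqP ->; apply: eM.
have [M2 eM2] := limFS n.+1; exists (maxn M1 M2) => m; rewrite geq_max => /andP[le1 le2] i.
by rewrite leq_eqVlt ltnS => /orP[/eqP -> | ]; [apply: eM2 | apply: IHn].
Qed.

Lemma ps_sum_to_exists (F : nat -> ps) :
  (forall k i, (i < k)%N -> F k i = 0) -> exists S, ps_sum_to F S.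
Proof.
move=> F_ord; exists (fun n => (\big[@ps_add K/ps_zero K]_(k < n.+1) F k) n).
move=> n; exists n.+1 => m le_nm; rewrite !ps_sum_coef.
rewrite -(subnKC le_nm) big_split_ord /= [X in _ + X]big1 ?addr0 // => i _.
by apply: F_ord; rewrite ltnS leq_addr.
Qed.

Lemma qprod_dvdp c lo hi : 'X^lo %| qprod c%:P 'X lo hi - 1.
Proof.
rewrite /qprod big_nat_cond; apply: (big_ind (fun p => 'X^lo %| p - 1)).
- by rewrite subrr dvdp0.
- move=> p r dvd_p dvd_r; rewrite (_ : p * r - 1 = (p - 1) * r + (r - 1)); last by ring.
  by rewrite dvdp_add ?dvdp_mulr.
- by move=> j /andP[/andP[le_lo_j _] _]; rewrite addrAC subrr add0r dvdpNr dvdp_mull // dvdp_exp2l.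
Qed.

Lemma qprod_coef0 c lo hi : (0 < lo)%N -> (qprod c%:P 'X lo hi)`_0 = 1.
Proof.
move=> lo_gt0; rewrite /qprod coef0_prod big_nat_cond big1 // => j /andP[/andP[le_lo_j _] _].
by rewrite coefB coef1 coefCM coefXn eqxx ltn_eqF ?(leq_trans lo_gt0 le_lo_j) ?mulr0 ?subr0.
Qed.

Lemma ps_of_poly_qfactor c k :
  ps_of_poly (1 - c%:P * 'X^k) = ps_sub (ps_one K) (ps_scale c (ps_qpow K k)).
Proof.
apply: ps_ext => i; rewrite /ps_sub /ps_add /ps_opp /ps_scale /ps_one /ps_const /ps_qpow.
by rewrite /ps_of_poly coefB coef1 coefCM coefXn; case: (i == 0)%N; case: (i == k).
Qed.

Lemma qpoch_cqE c n : qpoch_cq c n = ps_of_poly (qprod c%:P 'X 1 n.+1).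
Proof.
by rewrite /qpoch_cq /qprod ps_of_poly_prod; apply: eq_bigr => k _; rewrite ps_of_poly_qfactor.
Qed.

Lemma ps_of_qprod_coef0 c lo hi : (0 < lo)%N -> ps_of_poly (qprod c%:P 'X lo hi) 0%N != 0.
Proof. by move=> lo_gt0; rewrite /ps_of_poly qprod_coef0 ?oner_neq0. Qed.

Lemma qprodM_coef0 c d lo hi lo' hi' : (0 < lo)%N -> (0 < lo')%N ->
  ps_of_poly (qprod c%:P 'X lo hi * qprod d%:P 'X lo' hi') 0%N != 0.
Proof. by move=> lo_gt0 lo'_gt0; rewrite ps_of_polyM ps_mul_coef0 mulf_neq0 ?ps_of_qprod_coef0. Qed.

End PowerSeries.

HB.instance Definition _ (K : fieldType) :=
  Monoid.isComLaw.Build (ps K) (ps_one K) (@ps_mul K) ps_mulA ps_mulC ps_mul1.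

Section TruncatedIdentity.
Context {K : fieldType} (a b : K).
Local Notation ps := (ps K).
Local Notation psum F M := (\big[@ps_add K/ps_zero K]_(k < M) F k).

Definition theta_coef j : K := (-1) ^+ j * b ^+ j * a ^- j.

Definition lhs_term n : ps :=
  ps_mul (ps_qpow K n.+1) (ps_mul (ps_inv (qpoch_cq a n.+1)) (ps_inv (qpoch_cq b n.+1))).
Definition rhs_term1 n : ps :=
  ps_scale (theta_coef n.+1) (ps_mul (ps_qpow K 'C(n.+2, 2)) (ps_inv (qpoch_cq b n.+1))).
Definition rhs_term2 n : ps := ps_scale (theta_coef n) (ps_qpow K 'C(n.+1, 2)).
Definition prod_factor k : ps :=
  ps_inv (ps_mul (ps_sub (ps_one K) (ps_scale a (ps_qpow K k.+1)))
                 (ps_sub (ps_one K) (ps_scale b (ps_qpow K k.+1)))).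

Definition qden M : {poly K} := qprod a%:P 'X 1 M.+1 * qprod b%:P 'X 1 M.+1.

Local Notation Y M := (finite_lhs a%:P b%:P 'X 0 M).
Local Notation R1 M := (finite_rhs1 a%:P (a^-1)%:P b%:P 'X 0 M).
Local Notation R2 M := (finite_rhs2 a%:P (a^-1)%:P b%:P 'X 0 M).
Local Notation e := (rhs_coef (a^-1)%:P b%:P 'X 0).

Lemma qden_coef0 M : ps_of_poly (qden M) 0%N != 0.
Proof. exact: qprodM_coef0. Qed.

Lemma qden_agree {n m} :
  (n <= m)%N -> ps_agree n (ps_of_poly (qden m)) (ps_of_poly (qden n)).
Proof.
move=> le_nm; apply: ps_agree_of_dvdp; rewrite /qden !(@qprod_cat _ _ _ 1 n.+1 m.+1) //.
move: (qprod_dvdp a n.+1 m.+1) (qprod_dvdp b n.+1 m.+1).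
set A := qprod a%:P _ n.+1 _; set B := qprod b%:P _ n.+1 _ => dA dB.
rewrite (_ : _ - _ = qden n * ((A - 1) * B + (B - 1))); last by rewrite /qden; ring.
by rewrite dvdp_mull // dvdp_add ?dvdp_mulr.
Qed.

Lemma prod_factor_prod M :
  \big[@ps_mul K/ps_one K]_(k < M) prod_factor k = ps_inv (ps_of_poly (qden M)).
Proof.
elim: M => [|M IHM]; first by rewrite big_ord0 /qden !qprod_nn mulr1 ps_of_poly1 ps_inv1.
rewrite big_ord_recr /= IHM.
have -> : prod_factor M =
    ps_inv (ps_of_poly (qprod a%:P 'X M.+1 M.+2 * qprod b%:P 'X M.+1 M.+2)).
  by rewrite /prod_factor /qprod !big_nat1 ps_of_polyM !ps_of_poly_qfactor.
rewrite -ps_invM ?qden_coef0 ?qprodM_coef0 // -ps_of_polyM /qden.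
by rewrite !(@qprod_cat _ _ _ 1 M.+1 M.+2) ?leqnSn //; congr (ps_inv (ps_of_poly _)); ring.
Qed.

Lemma lhs_term_cleared n M : (n <= M)%N ->
  ps_mul (ps_mul (ps_qpow K n) (ps_mul (ps_inv (qpoch_cq a n)) (ps_inv (qpoch_cq b n))))
         (ps_of_poly (qden M))
  = ps_of_poly ('X^n * qprod a%:P 'X n.+1 M.+1 * qprod b%:P 'X n.+1 M.+1).
Proof.
move=> le_nM.
have -> : qden M = (qprod a%:P 'X 1 n.+1 * qprod b%:P 'X 1 n.+1)
                   * (qprod a%:P 'X n.+1 M.+1 * qprod b%:P 'X n.+1 M.+1).
  by rewrite /qden !(@qprod_cat _ _ _ 1 n.+1 M.+1) //; ring.
rewrite !qpoch_cqE -ps_invM ?ps_of_qprod_coef0 // -ps_of_polyM.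
rewrite [ps_of_poly (_ * (_ * _))]ps_of_polyM ps_invKl ?qprodM_coef0 //.
by rewrite -mulrA [ps_of_poly ('X^n * _)]ps_of_polyM ps_of_polyXn.
Qed.

Lemma lhs_partial M :
  ps_add (ps_one K) (psum lhs_term M) =
  ps_mul (ps_of_poly (Y M)) (ps_inv (ps_of_poly (qden M))).
Proof.
apply: ps_divr_eq; first exact: qden_coef0.
rewrite ps_mulDl ps_sum_mull ps_mul1 /finite_lhs big_ord_recl ps_of_polyD ps_of_poly_sum.
congr ps_add; first by rewrite /= expr0 mul1r !addn0.
by apply: eq_bigr => k _; rewrite lift0 !addn0 lhs_term_cleared.
Qed.

Lemma rhs_coef_polyE j : e j = theta_coef j *: 'X^('C(j.+1, 2)).
Proof.
rewrite /rhs_coef /theta_coef muln0 add0n -mul_polyC; congr (_ * _).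
by rewrite -polyCM -polyCN -polyC_exp -[- (b / a)]mulN1r !exprMn exprVn mulrA.
Qed.

Lemma rhs_term1_cleared j M : (j <= M)%N ->
  ps_mul (ps_scale (theta_coef j) (ps_mul (ps_qpow K 'C(j.+1, 2)) (ps_inv (qpoch_cq b j))))
         (ps_of_poly (qden M))
  = ps_of_poly (e j * qprod a%:P 'X 1 M.+1 * qprod b%:P 'X j.+1 M.+1).
Proof.
move=> le_jM; rewrite qpoch_cqE.
have -> : qden M = qprod b%:P 'X 1 j.+1 * (qprod a%:P 'X 1 M.+1 * qprod b%:P 'X j.+1 M.+1).
  by rewrite /qden (qprod_cat b%:P _ 1 j.+1 M.+1) //; ring.
rewrite ps_mulZl ps_of_polyM ps_invKl ?ps_of_qprod_coef0 //.
by rewrite rhs_coef_polyE -!mulrA -scalerAl ps_of_polyZ !ps_of_polyM ps_of_polyXn.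
Qed.

Lemma rhs1_partial M :
  ps_add (ps_one K) (psum rhs_term1 M) =
  ps_mul (ps_of_poly (R1 M)) (ps_inv (ps_of_poly (qden M))).
Proof.
apply: ps_divr_eq; first exact: qden_coef0.
rewrite ps_mulDl ps_sum_mull ps_mul1 /finite_rhs1 big_ord_recl ps_of_polyD ps_of_poly_sum.
congr ps_add; first by rewrite /= rhs_coef0 mul1r !addn0.
by apply: eq_bigr => k _; rewrite lift0 add0n addn0 rhs_term1_cleared.
Qed.

Lemma rhs2_partial M : psum rhs_term2 M = ps_of_poly (\sum_(j < M) e j).
Proof.
rewrite ps_of_poly_sum; apply: eq_bigr => j _.
by rewrite rhs_coef_polyE ps_of_polyZ ps_of_polyXn.
Qed.

Lemma rhs_coef_dvdp N j d p :
  (N < 'C(j.+1, 2) + d)%N -> 'X^d %| p -> 'X^(N.+1) %| e j * p.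
Proof.
move=> ltN dvd_p; rewrite rhs_coef_polyE -scalerAl -mul_polyC dvdp_mull //.
apply: dvdp_trans (dvdp_mul (dvdpp _) dvd_p); rewrite -exprD; exact: dvdp_exp2l.
Qed.

Lemma rhs2_dvdp {N M} : (N < M)%N -> 'X^(N.+1) %| R2 M - \sum_(j < M) e j.
Proof.
move=> ltNM; rewrite /finite_rhs2 big_ord_recr /= addrAC -sumrB dvdp_add //.
  apply: (big_ind (fun p => 'X^(N.+1) %| p)) => [|p r|j _]; [exact: dvdp0 | exact: dvdp_add |].
  rewrite /= -{2}[e j]mulr1 -mulrBr (@rhs_coef_dvdp N j (M - j).+1) ?qprod_dvdp //.
  by have := leq_bin2 j; have := ltn_ord j; lia.
rewrite (@rhs_coef_dvdp N M 0) ?expr0 ?dvd1p //.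
by rewrite addn0; apply: leq_trans ltNM (leq_bin2 M).
Qed.

Lemma partial_identity N M : a != 0 -> (N < M)%N ->
  ps_add (ps_one K) (psum lhs_term M) N =
  ps_add (ps_scale (1 - a^-1) (ps_add (ps_one K) (psum rhs_term1 M)))
         (ps_scale a^-1 (ps_mul (psum rhs_term2 M)
                                (\big[@ps_mul K/ps_one K]_(k < M) prod_factor k))) N.
Proof.
move=> a_neq0 ltNM; have aK : (a^-1)%:P * a%:P = 1 :> {poly K} by rewrite -polyCM mulVf.
rewrite lhs_partial rhs1_partial rhs2_partial prod_factor_prod (finite_identity _ _ _ _ aK).
rewrite -polyC1 -polyCB !mul_polyC ps_of_polyD !ps_of_polyZ ps_mulDl !ps_mulZl.
by rewrite /ps_add /ps_scale (ps_agree_mul (ps_agree_of_dvdp (rhs2_dvdp ltNM)) (fun _ _ => erefl)).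
Qed.

Lemma lhs_summable : exists S, ps_sum_to lhs_term S.
Proof. by apply: ps_sum_to_exists => k i lt_ik; apply/ps_qpowM_coef/ltnW. Qed.

Lemma rhs1_summable : exists S, ps_sum_to rhs_term1 S.
Proof.
apply: ps_sum_to_exists => k i lt_ik; rewrite /rhs_term1 /ps_scale ps_qpowM_coef ?mulr0 //.
by have := leq_bin2 k.+1; lia.
Qed.

Lemma rhs2_summable : exists S, ps_sum_to rhs_term2 S.
Proof.
apply: ps_sum_to_exists => k i lt_ik; rewrite /rhs_term2 /ps_scale /ps_qpow.
by rewrite ltn_eqF ?mulr0 // (leq_trans lt_ik (leq_bin2 k)).
Qed.

Lemma prod_factor_convergent : exists P, ps_prod_to prod_factor P.
Proof.
exists (fun n => ps_inv (ps_of_poly (qden n)) n) => n; exists n => m le_nm.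
by rewrite prod_factor_prod (ps_inv_agree (qden_agree le_nm)).
Qed.

End TruncatedIdentity.

Theorem mainTheorem1 :
  let a := var_a in
  let b := var_b in
  let T1 : nat -> ps Qab := fun n =>
    ps_mul (ps_qpow _ n.+1)
      (ps_mul (ps_inv (qpoch_cq a n.+1)) (ps_inv (qpoch_cq b n.+1))) in
  let T2 : nat -> ps Qab := fun n =>
    ps_scale ((-1) ^+ n.+1 * b ^+ n.+1 * a ^- n.+1)
      (ps_mul (ps_qpow _ 'C(n.+2, 2)) (ps_inv (qpoch_cq b n.+1))) in
  let T3 : nat -> ps Qab := fun n =>
    ps_scale ((-1) ^+ n * b ^+ n * a ^- n) (ps_qpow _ 'C(n.+1, 2)) in
  let P : nat -> ps Qab := fun k =>
    ps_inv (ps_mul (ps_sub (ps_one _) (ps_scale a (ps_qpow _ k.+1)))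
                   (ps_sub (ps_one _) (ps_scale b (ps_qpow _ k.+1)))) in
  ((exists S1, ps_sum_to T1 S1) /\ (exists S2, ps_sum_to T2 S2) /\
   (exists S3, ps_sum_to T3 S3) /\ (exists Pr, ps_prod_to P Pr)) /\
  forall S1 S2 S3 Pr,
    ps_sum_to T1 S1 -> ps_sum_to T2 S2 -> ps_sum_to T3 S3 -> ps_prod_to P Pr ->
    forall N : nat,
      ps_add (ps_one _) S1 N =
      ps_add (ps_scale (1 - a^-1) (ps_add (ps_one _) S2))
             (ps_scale a^-1 (ps_mul S3 Pr)) N.
Proof.
move=> a b T1 T2 T3 P; split.
  split; first exact: lhs_summable.
  split; first exact: rhs1_summable.
  by split; [exact: rhs2_summable | exact: prod_factor_convergent].
move=> S1 S2 S3 Pr sum1 sum2 sum3 prod N.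
have [M1 e1] := ps_lim_agree N sum1; have [M2 e2] := ps_lim_agree N sum2.
have [M3 e3] := ps_lim_agree N sum3; have [M4 e4] := ps_lim_agree N prod.
set M := (M1 + M2 + M3 + M4 + N).+1.
have [le1 le2 le3 le4 ltNM] : [/\ M1 <= M, M2 <= M, M3 <= M, M4 <= M & N < M]%N.
  by rewrite /M; split; lia.
have a_neq0 : a != 0 by rewrite /a /var_a tofrac_eq0 polyX_eq0.
rewrite /ps_add /ps_scale -(e1 M) // -(e2 M) // -(ps_agree_mul (e3 M le3) (e4 M le4)) //.
exact: partial_identity.
Qed.
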